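(* For any $(\hat\imath,\hat\jmath)\in\mathcal E$ with associated matrices $B_1,B_2$, $$\inf_{u^s\in\Delta_J}\Big(1+\big\langle e,B_1^{-1}B_2u^s\big\rangle\Big)>0.$$
   Context: Network: $\mathcal I=\{1,\dots,I\}$, $\mathcal J=\{1,\dots,J\}$, edges $\mathcal E\subset\mathcal I\times\mathcal J$ with the bipartite graph $\mathcal G=(\mathcal I\cup\mathcal J,\mathcal E)$ a tree; $\mathbb R^{\mathcal G}$ denotes arrays in $\mathbb R^{I\times J}$ vanishing off $\mathcal E$. Service rates $\mu_{ij}>0$ for $(i,j)\in\mathcal E$; $\mathcal J(i)=\{j:(i,j)\in\mathcal E\}$. Let $\mathcal D=\{(\alpha,\beta)\in\mathbb R^I\times\mathbb R^J:\sum_i\alpha_i=\sum_j\beta_j\}$ and $\Psi:\mathcal D\to\mathbb R^{\mathcal G}$ the unique linear map with $\sum_j\Psi_{ij}(\alpha,\beta)=\alpha_i$, $\sum_i\Psi_{ij}(\alpha,\beta)=\beta_j$. For $(\hat\imath,\hat\jmath)\in\mathcal E$, $B_1\in\mathbb R^{I\times I}$ and $B_2\in\mathbb R^{I\times J}$ are the unique matrices with column $\hat\jmath$ of $B_2$ zero and $\sum_{j\in\mathcal J(i)}\mu_{ij}\Psi_{ij}(\alpha,\beta)=(B_1\alpha+B_2\beta)_i$ for all $i$ and $(\alpha,\beta)\in\mathcal D$ ($B_1$ is invertible). $e$ is the all-ones vector and $\Delta_J=\{u\in\mathbb R^J_+:\langle e,u\rangle=1\}$. *)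

From HB Require Import structures.
From mathcomp Require Import all_boot all_order all_algebra.
Set Implicit Arguments. Unset Strict Implicit. Unset Printing Implicit Defensive.
Import Order.TTheory GRing.Theory Num.Theory.
Local Open Scope ring_scope.

(* Vertices of the bipartite graph G = (I u J, E): classes inl i, servers inr j. *)
Definition gvert (I J : nat) : finType := ('I_I + 'I_J)%type.

Definition gadj (I J : nat) (E : {set 'I_I * 'I_J}) : rel (gvert I J) :=
  fun x y => match x, y with
             | inl i, inr j => (i, j) \in E
             | inr j, inl i => (i, j) \in E
             | _, _ => false
             end.

Definition gconnected (I J : nat) (E : {set 'I_I * 'I_J}) : Prop :=
  forall x y : gvert I J, connect (gadj E) x y.

Definition gacyclic (I J : nat) (E : {set 'I_I * 'I_J}) : Prop :=
  forall c : seq (gvert I J), uniq c -> (3 <= size c)%N -> ~~ cycle (gadj E) c.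

Definition is_tree (I J : nat) (E : {set 'I_I * 'I_J}) : Prop :=
  gconnected E /\ gacyclic E.

Definition inD (R : nzRingType) (I J : nat) (a : 'cV[R]_I) (b : 'cV[R]_J) : Prop :=
  \sum_i a i 0 = \sum_j b j 0.

Definition is_Psi (R : nzRingType) (I J : nat) (E : {set 'I_I * 'I_J})
  (Psi : 'cV[R]_I -> 'cV[R]_J -> 'M[R]_(I, J)) : Prop :=
  forall a b, inD a b ->
    [/\ forall i j, (i, j) \notin E -> Psi a b i j = 0,
        forall i, \sum_j Psi a b i j = a i 0
      & forall j, \sum_i Psi a b i j = b j 0].

Definition are_B (R : nzRingType) (I J : nat) (E : {set 'I_I * 'I_J})
  (mu : 'I_I -> 'I_J -> R) (Psi : 'cV[R]_I -> 'cV[R]_J -> 'M[R]_(I, J))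
  (jhat : 'I_J) (B1 : 'M[R]_I) (B2 : 'M[R]_(I, J)) : Prop :=
  (forall i, B2 i jhat = 0) /\
  (forall a b, inD a b -> forall i,
     \sum_(j | (i, j) \in E) mu i j * Psi a b i j = (B1 *m a + B2 *m b) i 0).

From HB Require Import structures.
From mathcomp Require Import all_boot all_order all_algebra.
From mathcomp Require Import zify lra.
Import Order.TTheory GRing.Theory Num.Theory.
Local Open Scope ring_scope.

(* The map u |-> 1 + <e, M u>, with M := B1^-1 B2, is affine; on the simplex
   it equals sum_j u_j v_j with v_j := 1 + sum_i M_ij, so it suffices that
   every column weight v_j is positive (then min_j v_j is a positive bound).

   Both B1 being invertible and v_j > 0 reduce to one rigidity fact: if
   (a, b) in D satisfies B1 a + B2 b = 0 with b >= 0, then Psi(a, b) = 0.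
   Indeed Psi(a, b) is then a flow on the tree whose mu-weighted row sums
   vanish and whose column sums are nonnegative; orienting every edge by the
   sign of the flow gives a relation without 2-cycles in which every entered
   vertex can be left, so a nonzero flow would produce a simple cycle of
   length >= 3 in the tree. *)

Section SimpleCycles.
Context {T : finType} {d : rel T}.

Lemma maximal_simple_path (x : T) (p : seq T) :
  uniq (x :: p) -> path d x p ->
  exists q, [/\ uniq (x :: p ++ q), path d x (p ++ q) &
     forall w, d (last x (p ++ q)) w -> w \in x :: p ++ q].
Proof.
have [n] := ubnP (#|T| - size p); elim: n p => // n IH p size_p uniq_p path_p.
case: (pickP [pred w | d (last x p) w && (w \notin x :: p)]) => [w /andP[dw fresh]|closed].
  have uniq_pw : uniq (x :: rcons p w) by rewrite -rcons_cons rcons_uniq fresh.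
  have path_pw : path d x (rcons p w) by rewrite rcons_path path_p.
  have size_pw : (#|T| - size (rcons p w) < n)%N.
    have := max_card (mem (x :: rcons p w)).
    rewrite (card_uniqP uniq_pw) /= size_rcons.
    by move: (#|T|) size_p => k; lia.
  have [q [uniq_q path_q closed_q]] := IH _ size_pw uniq_pw path_pw.
  by exists (w :: q); rewrite -cat_rcons.
exists [::]; rewrite cats0; split=> // w dw.
by apply/negPn/negP=> w_new; have := closed w; rewrite /= dw w_new.
Qed.

(* A finite relation without 2-cycles in which every vertex entered by an
   edge can also be left contains a simple cycle of length at least 3, as
   soon as it has an edge: follow a maximal simple path and close it up. *)
Lemma sinkfree_simple_cycle :
  (forall a b, d a b -> ~~ d b a) ->
  (forall a b, d a b -> exists c, d b c) ->
  forall a b, d a b -> exists c : seq T, [/\ uniq c, (3 <= size c)%N & cycle d c].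
Proof.
move=> antisym sinkfree a b dab.
have ab_neq : a != b.
  by apply: contraTneq (antisym _ _ dab) => eq_ab; move: dab; rewrite eq_ab negbK.
have [||q [uniq_s path_s closed_s]] := @maximal_simple_path a [:: b].
- by rewrite /= inE ab_neq.
- by rewrite /= dab.
move: uniq_s path_s closed_s; rewrite cat1s => uniq_s path_s closed_s.
have [w dvw] : exists w, d (last a (b :: q)) w.
  apply: (sinkfree (last a (belast b q))).
  by move: path_s; rewrite lastI rcons_path last_rcons => /andP[_].
have [p1 [p2 s_split]] : exists p1 p2, a :: b :: q = p1 ++ w :: p2.
  by case/splitPr: (closed_s w dvw) => p1 p2; exists p1, p2.
have last_s : last a (b :: q) = last w p2.
  by rewrite -[last a (b :: q)](last_cons a) s_split last_cat last_cons.
have path_w : path d w p2.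
  by have /cat_sorted2[_] : sorted d (p1 ++ w :: p2) by rewrite -s_split.
exists (w :: p2); split.
- by move: uniq_s; rewrite s_split cat_uniq => /and3P[].
- case: p2 {s_split} last_s path_w => [|y [|z p2]] //= last_s.
    by move: dvw (antisym _ _ dvw); rewrite /= last_s => ->.
  by rewrite andbT => dwy; move: dvw (antisym _ _ dwy); rewrite /= last_s => ->.
- by rewrite /= rcons_path path_w -last_s.
Qed.

End SimpleCycles.

Section AcyclicFlows.
Variables (R : realFieldType) (I J : nat) (E : {set 'I_I * 'I_J}).
Variable x : 'M[R]_(I, J).

Definition flow_dir : rel (gvert I J) :=
  fun a b => match a, b with
  | inr j, inl i => ((i, j) \in E) && (0 < x i j)
  | inl i, inr j => ((i, j) \in E) && (x i j < 0)
  | _, _ => false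
  end.

Lemma flow_dir_sub : subrel flow_dir (gadj E).
Proof. by case=> [i|j] [i'|j'] //= /andP[]. Qed.

Lemma flow_dir_antisym a b : flow_dir a b -> ~~ flow_dir b a.
Proof.
case: a b => [i|j] [i'|j'] //= /andP[_ x_sgn]; apply/negP => /andP[_ x_sgn'].
  by have := lt_trans x_sgn x_sgn'; rewrite ltxx.
by have := lt_trans x_sgn x_sgn'; rewrite ltxx.
Qed.

Variable mu : 'I_I -> 'I_J -> R.
Hypothesis mu_pos : forall i j, (i, j) \in E -> 0 < mu i j.
Hypothesis x_supp : forall i j, (i, j) \notin E -> x i j = 0.
Hypothesis x_row : forall i, \sum_(j | (i, j) \in E) mu i j * x i j = 0.
Hypothesis x_col : forall j, 0 <= \sum_i x i j.

(* Balance forces flow through every entered vertex to leave it: a column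
   with an outflow needs an inflow since its sum is nonnegative, and a row
   with an inflow needs an outflow since its weighted sum vanishes. *)
Lemma flow_dir_sinkfree a b : flow_dir a b -> exists c, flow_dir b c.
Proof.
case: a b => [i|j] [i'|j'] //= /andP[ij_E x_sgn].
  case: (pickP [pred i'' | ((i'', j') \in E) && (0 < x i'' j')]) => [i'' out|no_out].
    by exists (inl i'').
  have col_neg : \sum_(i'' | i'' != i) x i'' j' <= 0.
    apply: sumr_le0 => i'' _; case: (boolP ((i'', j') \in E)) => [E''|/x_supp-> //].
    by move/negbT: (no_out i''); rewrite /= E'' /= -leNgt.
  by have := x_col j'; rewrite (bigD1 i) //=; lra.
case: (pickP [pred j'' | ((i', j'') \in E) && (x i' j'' < 0)]) => [j'' out|no_out].
  by exists (inr j'').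
have row_pos : 0 <= \sum_(j'' | ((i', j'') \in E) && (j'' != j)) mu i' j'' * x i' j''.
  apply: sumr_ge0 => j'' /andP[E'' _]; apply: mulr_ge0; first exact/ltW/mu_pos.
  by move/negbT: (no_out j''); rewrite /= E'' /= -leNgt.
have := mulr_gt0 (mu_pos _ _ ij_E) x_sgn.
by have := x_row i'; rewrite (bigD1 j) //=; lra.
Qed.

Lemma acyclic_flow_zero : gacyclic E -> x = 0.
Proof.
move=> acyclic; apply/matrixP=> i j; rewrite mxE.
case: (boolP ((i, j) \in E)) => [ij_E|/x_supp //].
apply/eqP; apply: contraT => x_nz.
have [a [b dab]] : exists a b, flow_dir a b.
  case: (ltgtP (x i j) 0) x_nz => [neg|pos|//] _.
  - by exists (inl i), (inr j); rewrite /= ij_E neg.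
  - by exists (inr j), (inl i); rewrite /= ij_E pos.
have [c [uniq_c size_c cycle_c]] :=
  sinkfree_simple_cycle flow_dir_antisym flow_dir_sinkfree _ _ dab.
by have := acyclic c uniq_c size_c; rewrite (sub_cycle flow_dir_sub cycle_c).
Qed.

End AcyclicFlows.

Arguments acyclic_flow_zero {R I J E x mu}.

Section ColumnSums.
Context {R : nzRingType} {n : nat}.

Lemma colsumD (u v : 'cV[R]_n) : \sum_i (u + v) i 0 = \sum_i u i 0 + \sum_i v i 0.
Proof. by rewrite -big_split; apply: eq_bigr => i _; rewrite mxE. Qed.

Lemma colsumN (u : 'cV[R]_n) : \sum_i (- u) i 0 = - \sum_i u i 0.
Proof. by rewrite -sumrN; apply: eq_bigr => i _; rewrite mxE. Qed.

Lemma colsumZ (s : R) (u : 'cV[R]_n) : \sum_i (s *: u) i 0 = s * \sum_i u i 0.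
Proof. by rewrite mulr_sumr; apply: eq_bigr => i _; rewrite mxE. Qed.

Lemma colsum_delta (j : 'I_n) : \sum_i (delta_mx j 0 : 'cV[R]_n) i 0 = 1.
Proof.
rewrite (bigD1 j) //= big1 => [|i /negbTE ij]; first by rewrite mxE !eqxx addr0.
by rewrite mxE ij.
Qed.

End ColumnSums.

Lemma affine_on_simplex (R : comNzRingType) m n (M : 'M[R]_(m, n)) (u : 'cV[R]_n) :
  \sum_j u j 0 = 1 -> 1 + \sum_i (M *m u) i 0 = \sum_j u j 0 * (1 + \sum_i M i j).
Proof.
move=> u_sum; under [RHS]eq_bigr do rewrite mulrDr mulr1.
rewrite big_split /= u_sum; congr (_ + _).
under eq_bigr do rewrite mxE.
rewrite exchange_big /=; apply: eq_bigr => j _.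
by rewrite mulr_sumr; apply: eq_bigr => i _; rewrite mulrC.
Qed.

Lemma simplex_lower_bound {R : realDomainType} {n : nat} {v : 'I_n -> R} (j0 : 'I_n) :
  (forall j, 0 < v j) ->
  exists2 c : R, 0 < c &
    forall u : 'cV[R]_n, (forall j, 0 <= u j 0) -> \sum_j u j 0 = 1 ->
      c <= \sum_j u j 0 * v j.
Proof.
move=> v_pos; have [jmin _ v_min] := @arg_minP _ _ _ j0 xpredT v isT.
exists (v jmin) => // u u_ge0 u_sum.
rewrite -[v jmin]mul1r -u_sum mulr_suml.
by apply: ler_sum => j _; apply: ler_wpM2l; [exact: u_ge0 | exact: v_min].
Qed.

Section ServiceMatrices.
Context {R : realFieldType} {I J : nat} {E : {set 'I_I * 'I_J}}.
Context {mu : 'I_I -> 'I_J -> R} {Psi : 'cV[R]_I -> 'cV[R]_J -> 'M[R]_(I, J)}.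
Context {jhat : 'I_J} {B1 : 'M[R]_I} {B2 : 'M[R]_(I, J)}.
Hypothesis E_acyclic : gacyclic E.
Hypothesis mu_pos : forall i j, (i, j) \in E -> 0 < mu i j.
Hypothesis PsiP : is_Psi E Psi.
Hypothesis BP : are_B E mu Psi jhat B1 B2.

Lemma B2_col_jhat : col jhat B2 = 0.
Proof. by apply/matrixP=> i k; rewrite !mxE; case: BP. Qed.

(* Rigidity: a load pair in D balanced by B1, B2 with nonnegative server
   loads has a vanishing Psi, since Psi is then a balanced flow on the tree. *)
Lemma balanced_Psi_zero {a : 'cV[R]_I} {b : 'cV[R]_J} :
  inD a b -> B1 *m a + B2 *m b = 0 -> (forall j, 0 <= b j 0) -> Psi a b = 0.
Proof.
move=> ab_D balanced b_ge0; have [supp rows cols] := PsiP _ _ ab_D.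
apply: (acyclic_flow_zero mu_pos supp _ _ E_acyclic) => [i|j]; last by rewrite cols.
by case: BP => _ ->; rewrite // balanced mxE.
Qed.

(* B1 is injective: put the total load of a on server jhat, whose column of
   B2 vanishes; rigidity then kills every row sum a_i of Psi. *)
Lemma B1_ker (a : 'cV[R]_I) : B1 *m a = 0 -> a = 0.
Proof.
wlog a_sum : a / 0 <= \sum_i a i 0 => [wlog_ge0 a_ker|a_ker].
  case: (lerP 0 (\sum_i a i 0)) => [a_ge0|a_neg]; first exact: wlog_ge0.
  apply: oppr_inj; rewrite oppr0; apply: wlog_ge0; last by rewrite mulmxN a_ker oppr0.
  by rewrite colsumN oppr_ge0 ltW.
pose b : 'cV[R]_J := (\sum_i a i 0) *: delta_mx jhat 0.
have ab_D : inD a b by rewrite /inD colsumZ colsum_delta mulr1.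
have balanced : B1 *m a + B2 *m b = 0.
  by rewrite a_ker add0r -scalemxAr -colE B2_col_jhat scaler0.
have b_ge0 j : 0 <= b j 0 by rewrite !mxE mulr_ge0 ?ler0n.
have [_ rows _] := PsiP _ _ ab_D.
apply/matrixP=> i k; rewrite (ord1 k) mxE -rows (balanced_Psi_zero ab_D balanced b_ge0).
by rewrite big1 // => j _; rewrite mxE.
Qed.

Lemma B1_unit : B1 \in unitmx.
Proof.
rewrite -unitmx_tr -row_free_unit; apply: inj_row_free => v vB1.
apply: trmx_inj; rewrite trmx0; apply: B1_ker.
by rewrite -[B1]trmxK -trmx_mul vB1 trmx0.
Qed.

(* Every column weight 1 + sum_i (B1^-1 B2)_ij is positive: otherwise the
   load a := -(B1^-1 B2)_{.j} with unit load on server j and the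
   nonnegative remainder on jhat is balanced, and rigidity contradicts the
   unit column sum at j. *)
Lemma colsum_pos j : 0 < 1 + \sum_i (invmx B1 *m B2) i j.
Proof.
set M := invmx B1 *m B2.
have B1M : B1 *m M = B2 by rewrite mulKVmx // B1_unit.
have [->|j_ne] := eqVneq j jhat.
  have Mjhat : col jhat M = 0 by rewrite colE -mulmxA -colE B2_col_jhat mulmx0.
  rewrite big1 ?addr0 ?ltr01 // => i _.
  by move/matrixP: Mjhat => /(_ i 0); rewrite !mxE.
rewrite ltNge; apply/negP => colsum_le0.
pose a : 'cV[R]_I := - col j M.
have a_sum : \sum_i a i 0 = - \sum_i M i j.
  by rewrite colsumN; congr (- _); apply: eq_bigr => i _; rewrite mxE.
pose t := \sum_i a i 0 - 1.
have t_ge0 : 0 <= t by rewrite /t a_sum; lra.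
pose b : 'cV[R]_J := delta_mx j 0 + t *: delta_mx jhat 0.
have ab_D : inD a b.
  by rewrite /inD colsumD colsumZ !colsum_delta mulr1 /t addrC subrK.
have balanced : B1 *m a + B2 *m b = 0.
  rewrite mulmxN colE mulmxA B1M -colE mulmxDr -scalemxAr -!colE.
  by rewrite B2_col_jhat scaler0 addr0 addNr.
have b_ge0 k : 0 <= b k 0 by rewrite !mxE addr_ge0 ?mulr_ge0 ?ler0n.
have [_ _ cols] := PsiP _ _ ab_D.
have := cols j; rewrite (balanced_Psi_zero ab_D balanced b_ge0).
rewrite big1 => [|i _]; last by rewrite mxE.
by rewrite !mxE eqxx (negbTE j_ne) mulr0 addr0 => /eqP; rewrite eq_sym oner_eq0.
Qed.

End ServiceMatrices.

Theorem lemma2 (R : realFieldType) (I J : nat) (E : {set 'I_I * 'I_J})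
  (mu : 'I_I -> 'I_J -> R)
  (Psi : 'cV[R]_I -> 'cV[R]_J -> 'M[R]_(I, J))
  (ihat : 'I_I) (jhat : 'I_J) (B1 : 'M[R]_I) (B2 : 'M[R]_(I, J)) :
  is_tree E ->
  (forall i j, (i, j) \in E -> 0 < mu i j) ->
  is_Psi E Psi ->
  (ihat, jhat) \in E ->
  are_B E mu Psi jhat B1 B2 ->
  exists2 c : R, 0 < c &
    forall u : 'cV[R]_J, (forall j, 0 <= u j 0) -> \sum_j u j 0 = 1 ->
      c <= 1 + \sum_i (invmx B1 *m B2 *m u) i 0.
Proof.
move=> [_ E_acyclic] mu_pos PsiP _ BP.
have [c c_pos c_le] := simplex_lower_bound jhat (colsum_pos E_acyclic mu_pos PsiP BP).
by exists c => // u u_ge0 u_sum; rewrite affine_on_simplex //; exact: c_le.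
Qed.
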